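(* Let $m\ge 2$ and $n\ge 3$ be integers. Then $\chi_{ei}(P_m\square C_n)=6$ if $n=3$; $=5$ if $n=5$; $=4$ if $n=7$; $=2$ if $n$ is even; and $=3$ if $n$ is odd and $n\ge 9$.
   Context: All graphs are finite and simple. $P_k$ and $C_k$ denote the path and the cycle on $k$ vertices. A path $P_4$ in $G$ is a sequence $uxyv$ of four distinct vertices with $ux,xy,yv\in E(G)$; $u,v$ are its end vertices. An $e$-injective $k$-coloring of $G$ is a function $f:V(G)\to\{1,\dots,k\}$ with $f(u)\ne f(v)$ whenever $u,v$ are the end vertices of some path $P_4$ in $G$; $\chi_{ei}(G)$ is the least such $k$. In the Cartesian product $G\square H$ two vertices are adjacent if they are adjacent in one coordinate and equal in the other. *)

From mathcomp Require Import all_boot.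
Set Implicit Arguments. Unset Strict Implicit. Unset Printing Implicit Defensive.

Section EI.
Variable T : finType.
Variable e : rel T.

Definition p4_ends (u v : T) : bool :=
  [exists x : T, exists y : T,
     [&& uniq [:: u; x; y; v], e u x, e x y & e y v]].

Definition ei_coloring (k : nat) (f : T -> 'I_k) : bool :=
  [forall u, forall v, p4_ends u v ==> (f u != f v)].

Definition ei_colorable (k : nat) : bool :=
  [exists f : {ffun T -> 'I_k}, ei_coloring f].

Lemma ei_colorable_card : exists k, ei_colorable k.
Proof.
exists #|T|; apply/existsP; exists (finfun (@enum_rank T)).
apply/forallP => u; apply/forallP => v; apply/implyP.
move=> /existsP [x /existsP [y /and4P [Hu _ _ _]]]; rewrite !ffunE.
apply/negP => /eqP /enum_rank_inj Huv; move: Hu; rewrite Huv /=.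
by rewrite !inE eqxx !orbT.
Qed.

Definition chi_ei : nat := ex_minn ei_colorable_card.
End EI.

Definition path_rel (m : nat) : rel 'I_m :=
  fun i j => (i.+1 == j :> nat) || (j.+1 == i :> nat).

Definition cycle_rel (n : nat) : rel 'I_n :=
  fun i j => (i.+1 %% n == j :> nat) || (j.+1 %% n == i :> nat).

Definition cart_rel (A B : finType) (eA : rel A) (eB : rel B) : rel (A * B) :=
  fun u v => ((u.1 == v.1) && eB u.2 v.2) || ((u.2 == v.2) && eA u.1 v.1).
Arguments path_rel m : clear implicits.
Arguments cycle_rel n : clear implicits.

From mathcomp Require Import all_boot zify.
Set Implicit Arguments. Unset Strict Implicit. Unset Printing Implicit Defensive.

(* For n >= 4 everything reduces to the circulant graph C_n(1,3), where
   x ~ y iff y - x = +-1 or +-3 (mod n).  The map (i, j) |-> i + j (mod n) is a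
   homomorphism from P_m [] C_n onto C_n, so the ends of a P4 land at cyclic
   distance 1 or 3 and every proper colouring of C_n(1,3) lifts to an
   e-injective colouring.  Conversely (0, j), (0, j + 1) are the ends of a P4
   through row 1 and (0, j), (0, j + 3) those of a P4 along row 0, so an
   e-injective colouring restricts to a proper colouring of C_n(1,3).  Hence
   chi_ei = chi(C_n(1,3)), which is 2 for even n, 3 for odd n >= 9, 4 for n = 7
   and 5 for n = 5 (C_5(1,3) = K_5).  For n = 3 the six vertices of P_2 [] C_3
   are pairwise ends of P4s, while (i mod 2, j) is an e-injective colouring. *)

Section EIColorings.
Variable T : finType.
Variable e : rel T.

Lemma ei_coloringP k (f : T -> 'I_k) :
  reflect (forall u v, p4_ends e u v -> f u != f v) (ei_coloring e f).
Proof.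
apply: (iffP forallP) => [hf u v | hf u].
  by move/forallP/(_ v)/implyP: (hf u).
by apply/forallP => v; apply/implyP; apply: hf.
Qed.

Lemma ei_colorable_fin (C : finType) (f : T -> C) :
  (forall u v, p4_ends e u v -> f u != f v) -> ei_colorable e #|C|.
Proof.
move=> hf; apply/existsP; exists [ffun u => enum_rank (f u)].
apply/ei_coloringP => u v /hf; rewrite !ffunE; exact: contra_neq (@enum_rank_inj _ _ _).
Qed.

Lemma ei_colorable_leq j k : j <= k -> ei_colorable e j -> ei_colorable e k.
Proof.
move=> hjk /existsP [f /ei_coloringP hf]; apply/existsP.
exists [ffun u => widen_ord hjk (f u)]; apply/ei_coloringP => u v /hf.
rewrite !ffunE; apply: contra_neq => /(congr1 val) hv; exact: val_inj.
Qed.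

Lemma chi_ei_eq k : ei_colorable e k.+1 -> ~~ ei_colorable e k -> chi_ei e = k.+1.
Proof.
move=> hk1 hk; rewrite /chi_ei; case: ex_minnP => c hc /(_ _ hk1) hck.
apply/eqP; rewrite eqn_leq hck /=; apply: contraNT hk; rewrite -ltnNge ltnS => hc1.
exact: ei_colorable_leq hc1 hc.
Qed.

Lemma p4_clique_card k :
  (forall u v, u != v -> p4_ends e u v) -> ei_colorable e k -> #|T| <= k.
Proof.
move=> hcl /existsP [f /ei_coloringP hf].
rewrite -[k]card_ord; apply: (@leq_card _ _ f).
by move=> u v fuv; apply/eqP; apply: contraT => /hcl /hf; rewrite fuv eqxx.
Qed.

End EIColorings.

Section Subgraph.
Variables (T T' : finType) (e : rel T) (e' : rel T') (h : T' -> T).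
Hypothesis h_inj : injective h.
Hypothesis h_hom : forall x y, e' x y -> e (h x) (h y).

Lemma p4_ends_inj_hom u v : p4_ends e' u v -> p4_ends e (h u) (h v).
Proof.
case/existsP => x /existsP [y /and4P [huniq exy1 exy2 exy3]].
apply/existsP; exists (h x); apply/existsP; exists (h y).
by rewrite -(map_inj_uniq h_inj) in huniq; rewrite huniq !h_hom.
Qed.

Lemma ei_colorable_inj_hom k : ei_colorable e k -> ei_colorable e' k.
Proof.
case/existsP => f /ei_coloringP hf; apply/existsP; exists [ffun u => f (h u)].
by apply/ei_coloringP => u v /p4_ends_inj_hom /hf; rewrite !ffunE.
Qed.

End Subgraph.

(* An eA-step flips the side and keeps the second coordinate, an eB-step keeps
   the first one.  Equal sides force an even number of eA-steps: with none the
   ends coincide, with two the second coordinate moves exactly once. *)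
Lemma cart_p4_ends_sides (A B : finType) (eA : rel A) (eB : rel B)
    (side : A -> bool) u v :
  (forall a a', eA a a' -> side a' = ~~ side a) -> irreflexive eB ->
  p4_ends (cart_rel eA eB) u v -> (side u.1, u.2) != (side v.1, v.2).
Proof.
move=> side_flip eB_irr /existsP [x /existsP [y /and4P [uxyv_uniq ux xy yv]]].
apply: contraTneq uxyv_uniq => -[side_uv col_uv].
case: u x y v ux xy yv side_uv col_uv => [a1 b1] [a2 b2] [a3 b3] [a4 b4].
rewrite /cart_rel /= => /orP [] /andP [/eqP <- e1] /orP [] /andP [/eqP <- e2]
  /orP [] /andP [/eqP <- e3] side14 b14.
all: rewrite ?b14 ?eB_irr // in e1 e2 e3 *.
all: try by rewrite !inE eqxx ?orbT.
all: rewrite ?(side_flip _ _ e3) ?(side_flip _ _ e2) ?(side_flip _ _ e1) in side14.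
all: by move: side14; case: (side _).
Qed.

Section Cycle.
Variable p : nat.
Implicit Types a b c d x y : 'I_p.

Lemma cycle_relE a b : cycle_rel p a b = (ordS a == b) || (ordS b == a).
Proof. by rewrite /cycle_rel -!val_eqE. Qed.

Lemma val_iter_ordS x t : val (iter t (@ordS p) x) = (x + t) %% p.
Proof.
elim: t => [|t IH]; first by rewrite addn0 modn_small.
by rewrite iterS /= IH -addn1 modnDml addn1 addnS.
Qed.

Lemma iter_ordS_period x : iter p (@ordS p) x = x.
Proof. by apply: val_inj; rewrite val_iter_ordS modnDr modn_small. Qed.

Lemma iter_ordS_subK x t : t <= p -> iter t (@ordS p) (iter (p - t) (@ordS p) x) = x.
Proof. by move=> tp; rewrite -iterD subnKC // iter_ordS_period. Qed.

Lemma iter_ordS_eq x s t : s < p -> t < p ->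
  (iter s (@ordS p) x == iter t (@ordS p) x) = (s == t).
Proof. by move=> sp tp; rewrite -val_eqE !val_iter_ordS eqn_modDl !modn_small. Qed.

Lemma iter_ordS_onto x y : exists2 t, t < p & y = iter t (@ordS p) x.
Proof.
have p_gt0 : 0 < p by case: p x => [[]|].
exists ((y + (p - x)) %% p); first exact: ltn_pmod.
apply: val_inj; rewrite val_iter_ordS modnDmr addnCA subnKC; last exact: ltnW.
by rewrite modnDr modn_small.
Qed.

Lemma cycle_relP a b : cycle_rel p a b -> b = ordS a \/ b = ord_pred a.
Proof. by rewrite cycle_relE => /orP [] /eqP <-; [left | right; rewrite ordSK]. Qed.

Lemma cycle_walk3 a b c d :
  cycle_rel p a b -> cycle_rel p b c -> cycle_rel p c d ->
  [\/ d = ordS a, a = ordS d, d = iter 3 (@ordS p) a | a = iter 3 (@ordS p) d].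
Proof.
move=> /cycle_relP [->|->] /cycle_relP [->|->] /cycle_relP [->|->];
  rewrite ?ordSK ?ord_predK;
  by [apply: Or41 | apply: Or42; rewrite ?ord_predK | apply: Or43
     | apply: Or44; rewrite /= !ord_predK].
Qed.

(* Proper colourings of C_p(1,3); [iter t ordS x] is x + t (mod p). *)
Definition circ13_coloring (C : eqType) (s : 'I_p -> C) : bool :=
  [forall x, (s (ordS x) != s x) && (s (iter 3 (@ordS p) x) != s x)].

Definition circ13_colorable (k : nat) : bool :=
  [exists s : {ffun 'I_p -> 'I_k}, circ13_coloring s].

Section Circ13Coloring.
Variables (C : eqType) (s : 'I_p -> C).
Hypothesis s_col : circ13_coloring s.

Lemma circ13_coloring_walk3 a b c d :
  cycle_rel p a b -> cycle_rel p b c -> cycle_rel p c d -> s a != s d.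
Proof.
move=> ab bc cd; have /forallP col := s_col.
case: (cycle_walk3 ab bc cd) => ->.
- by rewrite eq_sym; case/andP: (col a).
- by case/andP: (col d).
- by rewrite eq_sym; case/andP: (col a).
- by case/andP: (col d).
Qed.

Lemma circ13_coloring_iter x t : 3 <= p -> t \in [:: 1; 3; p - 1; p - 3] ->
  s (iter t (@ordS p) x) != s x.
Proof.
move=> p_ge3; have /forallP col := s_col.
rewrite !inE => /or4P [] /eqP ->.
- by case/andP: (col x).
- by case/andP: (col x).
- rewrite -{2}(iter_ordS_subK x (leq_trans (isT : 1 <= 3) p_ge3)) eq_sym.
  by case/andP: (col (iter (p - 1) (@ordS p) x)).
- rewrite -{2}(iter_ordS_subK x p_ge3) eq_sym.
  by case/andP: (col (iter (p - 3) (@ordS p) x)).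
Qed.

End Circ13Coloring.

Lemma circ13_colorable_nat k (s : 'I_p -> nat) :
  (forall x, s x < k) -> circ13_coloring s -> circ13_colorable k.
Proof.
move=> s_lt s_col; apply/existsP; exists [ffun x => Ordinal (s_lt x)].
by apply/forallP => x; rewrite !ffunE -!val_eqE; exact: (forallP s_col x).
Qed.

End Cycle.

Local Notation cyl m n := (cart_rel (path_rel m) (cycle_rel n)).

Section Diagonal.
Variables m p : nat.

Definition diag (u : 'I_m * 'I_p) : 'I_p := iter u.1 (@ordS p) u.2.

Lemma cycle_rel_diag u v : cyl m p u v -> cycle_rel p (diag u) (diag v).
Proof.
rewrite /diag cycle_relE; case: u v => [i j] [i' j']; rewrite /cart_rel /=.
case/orP => /andP [/eqP <-].
- have comm j0 : iter i (@ordS p) (ordS j0) = ordS (iter i (@ordS p) j0).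
    by rewrite -iterSr.
  by rewrite cycle_relE => /orP [] /eqP <-; rewrite comm eqxx ?orbT.
- by rewrite /path_rel => /orP [] /eqP <-; rewrite eqxx ?orbT.
Qed.

Lemma ei_coloring_diag k (s : 'I_p -> 'I_k) :
  circ13_coloring s -> ei_coloring (cyl m p) (fun u => s (diag u)).
Proof.
move=> s_col; apply/ei_coloringP => u v.
case/existsP => x /existsP [y /and4P [_ ux xy yv]].
exact (circ13_coloring_walk3 s_col
         (cycle_rel_diag ux) (cycle_rel_diag xy) (cycle_rel_diag yv)).
Qed.

End Diagonal.

Section Rows.
Variable p : nat.
Implicit Type x : 'I_p.

Lemma p4_ends_row_ordS x : 1 < p -> p4_ends (cyl 2 p) (ord0, x) (ord0, ordS x).
Proof.
move=> p_gt1; apply/existsP; exists (ord_max, x).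
apply/existsP; exists (ord_max, ordS x).
have Sx_neq : (x == ordS x) = false := iter_ordS_eq x (ltnW p_gt1) p_gt1.
by rewrite /= !inE !xpair_eqE /cart_rel /= Sx_neq cycle_relE !eqxx.
Qed.

Lemma p4_ends_row_ordS3 x : 3 < p ->
  p4_ends (cyl 2 p) (ord0, x) (ord0, iter 3 (@ordS p) x).
Proof.
move=> p_gt3; apply/existsP; exists (ord0, ordS x).
apply/existsP; exists (ord0, iter 2 (@ordS p) x).
have -> : [:: (ord0, x); (ord0, ordS x); (ord0, iter 2 (@ordS p) x);
              (ord0, iter 3 (@ordS p) x)]
          = [seq (ord0 : 'I_2, iter t (@ordS p) x) | t <- iota 0 4] by [].
rewrite map_inj_in_uniq ?iota_uniq; last first.
  move=> s t; rewrite !mem_iota => /andP [_ s_lt] /andP [_ t_lt] [/eqP].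
  have [s_p t_p] : s < p /\ t < p by split; apply: leq_trans p_gt3.
  by rewrite iter_ordS_eq // => /eqP.
by rewrite /cart_rel /= !cycle_relE !eqxx.
Qed.

Lemma circ13_coloring_row k (f : 'I_2 * 'I_p -> 'I_k) :
  3 < p -> ei_coloring (cyl 2 p) f -> circ13_coloring (fun x => f (ord0, x)).
Proof.
move=> p_gt3 /ei_coloringP f_col; apply/forallP => x /=.
rewrite ![f _ == f (ord0, x)]eq_sym; apply/andP; split; apply: f_col.
  exact/p4_ends_row_ordS/ltnW/ltnW.
exact: p4_ends_row_ordS3.
Qed.

End Rows.

Lemma ei_colorable_cyl2 m p k :
  1 < m -> ei_colorable (cyl m p) k -> ei_colorable (cyl 2 p) k.
Proof.
move=> m_gt1.
apply: (ei_colorable_inj_hom (h := fun u => (widen_ord m_gt1 u.1, u.2))) => //.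
by move=> [[a a_lt] j] [[b b_lt] j'] [eq_ab ->]; congr pair; apply: val_inj.
Qed.

Lemma ei_colorable_cylE m p k :
  1 < m -> 3 < p -> ei_colorable (cyl m p) k = circ13_colorable p k.
Proof.
move=> m_gt1 p_gt3; apply/idP/idP.
- move/(ei_colorable_cyl2 m_gt1)/existsP => [f f_col].
  apply/existsP; exists [ffun x => f (ord0, x)]; apply/forallP => x; rewrite !ffunE.
  exact: (forallP (circ13_coloring_row p_gt3 f_col) x).
- case/existsP => s s_col; apply/existsP; exists [ffun u => s (diag u)].
  apply/ei_coloringP => u v; rewrite !ffunE.
  exact: (ei_coloringP _ _ (ei_coloring_diag m s_col)).
Qed.

Lemma ord3_third (a b c d : 'I_3) :
  a != b -> a != c -> b != c -> d != a -> d != c -> d = b.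
Proof.
case: a b c d => [a ?] [b ?] [c ?] [d ?]; rewrite -!val_eqE /= => *.
by apply: val_inj => /=; lia.
Qed.

Lemma circ13_uncolorable1 p : 0 < p -> ~~ circ13_colorable p 1.
Proof.
move=> p_gt0; apply/negP => /existsP [s /forallP /(_ (Ordinal p_gt0)) /andP [+ _]].
by rewrite (ord1 (s _)) (ord1 (s (Ordinal _))) eqxx.
Qed.

Lemma circ13_uncolorable2_odd p : odd p -> ~~ circ13_colorable p 2.
Proof.
move=> p_odd; apply/negP => /existsP [s /forallP s_col].
pose x0 : 'I_p := Ordinal (odd_gt0 p_odd).
have flip x : odd (s (ordS x)) = ~~ odd (s x).
  case/andP: (s_col x) => + _.
  by case: (s (ordS x)) (s x) => [[|[|//]] ?] [[|[|//]] ?].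
have alt t : odd (s (iter t (@ordS p) x0)) = odd (s x0) (+) odd t.
  by elim: t => [|t IH]; rewrite ?addbF // iterS flip IH addbN.
by have := alt p; rewrite iter_ordS_period p_odd addbT; case: (odd _).
Qed.

Lemma circ13_colorable2_even p : ~~ odd p -> circ13_colorable p 2.
Proof.
move=> p_even; apply: (@circ13_colorable_nat p 2 (fun x => odd x)) => [x|].
  by case: (odd x).
apply/forallP => x; rewrite val_iter_ordS /= !odd_mod ?(negbTE p_even) //.
by rewrite oddD /=; case: (odd x).
Qed.

Lemma circ13_colorable5 : circ13_colorable 5 5.
Proof.
apply: (@circ13_colorable_nat 5 5 val) => [x|]; first exact: ltn_ord.
by apply/forallP => -[[|[|[|[|[|//]]]]] ?].
Qed.

Lemma circ13_uncolorable5_4 : ~~ circ13_colorable 5 4.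
Proof.
apply/negP => /existsP [s s_col].
suff /leq_card : injective s by rewrite !card_ord.
move=> x y sxy; apply/eqP; apply: contraT => x_neq_y.
have [t t_lt def_y] := iter_ordS_onto x y.
have t_gt0 : t != 0 by apply: contraNneq x_neq_y; rewrite def_y => ->.
have t_far : t \in [:: 1; 3; 5 - 1; 5 - 3].
  by case: t t_gt0 t_lt {def_y} => [|[|[|[|[|]]]]].
by have := circ13_coloring_iter s_col x isT t_far; rewrite -def_y sxy eqxx.
Qed.

Lemma circ13_colorable7 : circ13_colorable 7 4.
Proof.
apply: (@circ13_colorable_nat 7 4 (fun x => nth 0 [:: 0; 1; 0; 1; 2; 3; 2] x)).
  by move=> [[|[|[|[|[|[|[|//]]]]]]] ?].
by apply/forallP => -[[|[|[|[|[|[|[|//]]]]]]] ?].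
Qed.

(* x, x + 1 and x + 4 are pairwise adjacent and x + 3 is adjacent to x and to
   x + 4, so a 3-colouring satisfies s (x + 3) = s (x + 1): it would be
   2-periodic on the odd cycle Z_7. *)
Lemma circ13_uncolorable7_3 : ~~ circ13_colorable 7 3.
Proof.
apply/negP => /existsP [s s_col].
have far x t : t \in [:: 1; 3; 6; 4] -> s (iter t (@ordS 7) x) != s x.
  exact: (circ13_coloring_iter s_col x isT).
have S3_S x : s (iter 3 (@ordS 7) x) = s (ordS x).
  apply: (@ord3_third (s x) _ (s (iter 4 (@ordS 7) x))).
  - by rewrite eq_sym (far x 1).
  - by rewrite eq_sym (far x 4).
  - by rewrite eq_sym (far (ordS x) 3).
  - exact: (far x 3).
  - by rewrite eq_sym (far (iter 3 (@ordS 7) x) 1).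
have S2 y : s (iter 2 (@ordS 7) y) = s y.
  have := S3_S (iter 6 (@ordS 7) y).
  by rewrite -iterS -iterD (iterD 2 7) iter_ordS_period.
have S8 y : s (iter 8 (@ordS 7) y) = s y.
  by rewrite (iterD 2 6) S2 (iterD 2 4) S2 (iterD 2 2) S2 S2.
have := far ord0 1 isT.
by rewrite -(S8 ord0) (iterD 1 7) iter_ordS_period eqxx.
Qed.

(* On Z_p with p odd this reads 2 1 2 0 2 0 1 0 1 ... 0 1: it alternates
   except in the window of circ13_pattern_window. *)
Definition circ13_pattern (j : nat) : nat :=
  if j < 5 then nth 0 [:: 2; 1; 2; 0; 2] j else ~~ odd j.

Lemma circ13_pattern_lt3 j : circ13_pattern j < 3.
Proof.
rewrite /circ13_pattern; case: (ltnP j 5) => [|_]; last by case: odd.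
by case: j => [|[|[|[|[|//]]]]].
Qed.

Section OddPattern.
Variable p : nat.
Hypotheses (p_odd : odd p) (p_ge9 : 9 <= p).

Lemma circ13_pattern_window i : i < 11 ->
  circ13_pattern ((p - 3 + i) %% p) = nth 0 [:: 1; 0; 1; 2; 1; 2; 0; 2; 0; 1; 0] i.
Proof.
move=> i_lt; case: (ltnP i 3) => [i_lt3 | i_ge3].
  rewrite modn_small /circ13_pattern ?ifF; try lia.
  rewrite oddD oddB ?p_odd; last lia.
  by case: i i_lt3 {i_lt} => [|[|[|]]].
rewrite (_ : p - 3 + i = i - 3 + p); last lia.
rewrite modnDr modn_small; last lia.
by case: i i_lt i_ge3 => [|[|[|[|[|[|[|[|[|[|[|]]]]]]]]]]].
Qed.

Lemma circ13_pattern_shift j t : j < p -> t \in [:: 1; 3] ->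
  circ13_pattern ((j + t) %% p) != circ13_pattern j.
Proof.
move=> j_lt t_in; have [t_odd t_le3] : odd t /\ t <= 3.
  by move: t_in; rewrite !inE => /orP [] /eqP ->.
case: (boolP ((5 <= j) && (j + 3 < p))) => [/andP [j_ge5 j_lt'] | j_edge].
  by rewrite modn_small /circ13_pattern ?ifF; lia.
have [i i_lt8 ->] : exists2 i, i < 8 & j = (p - 3 + i) %% p.
  case: (ltnP j 5) => j5.
    exists (j + 3); first lia.
    by rewrite (_ : p - 3 + (j + 3) = j + p) ?modnDr ?modn_small //; lia.
  exists (j + 3 - p); first lia.
  by rewrite modn_small; lia.
rewrite modnDml -addnA !circ13_pattern_window; try lia.
by move: t_in; rewrite !inE => /orP [] /eqP ->; case: i i_lt8 => [|[|[|[|[|[|[|[|]]]]]]]].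
Qed.

Lemma circ13_colorable3_odd : circ13_colorable p 3.
Proof.
apply: (@circ13_colorable_nat p 3 (fun x => circ13_pattern x)) => [x|].
  exact: circ13_pattern_lt3.
apply/forallP => x; rewrite val_iter_ordS /= -addn1.
by rewrite !circ13_pattern_shift.
Qed.

End OddPattern.

Lemma ei_colorable_cyl3 m : ei_colorable (cyl m 3) 6.
Proof.
have := @ei_colorable_fin _ (cyl m 3) _ (fun u : 'I_m * 'I_3 => (odd u.1, u.2)).
rewrite card_prod card_bool card_ord; apply=> u v.
apply: (cart_p4_ends_sides (side := fun i : 'I_m => odd i)).
  by move=> i j /orP [] /eqP <- /=; rewrite ?negbK.
by case=> [[|[|[|//]]] ?].
Qed.

Definition prism_vertices : seq ('I_2 * 'I_3) :=
  [seq (i, j) | i <- [:: ord0; ord_max], j <- [:: ord0; ordS ord0; ord_max]].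

(* Enumerating a finType does not reduce under vm_compute, hence the explicit
   vertex list. *)
Lemma p4_ends_cyl23 u v : u != v -> p4_ends (cyl 2 3) u v.
Proof.
have all_vertices w : w \in prism_vertices.
  by case: w => [[[|[|//]] ?] [[|[|[|//]]] ?]].
have : all (fun u => all (fun v => (u == v) || has (fun x => has (fun y =>
         [&& uniq [:: u; x; y; v], cyl 2 3 u x, cyl 2 3 x y & cyl 2 3 y v])
         prism_vertices) prism_vertices) prism_vertices) prism_vertices.
  by vm_compute.
move/allP/(_ u (all_vertices u))/allP/(_ v (all_vertices v)).
case/orP => [/eqP -> | /hasP [x _ /hasP [y _ p4]]]; first by rewrite eqxx.
by move=> _; apply/existsP; exists x; apply/existsP; exists y.
Qed.

Lemma ei_uncolorable_cyl3 m : 1 < m -> ~~ ei_colorable (cyl m 3) 5.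
Proof.
move=> m_gt1; apply/negP.
move=> /(ei_colorable_cyl2 m_gt1) /(p4_clique_card p4_ends_cyl23).
by rewrite card_prod !card_ord.
Qed.

Theorem theorem4p4 (m n : nat) : 2 <= m -> 3 <= n ->
  let c := chi_ei (cart_rel (path_rel m) (cycle_rel n)) in
  [/\ n = 3 -> c = 6,
      n = 5 -> c = 5,
      n = 7 -> c = 4,
      ~~ odd n -> c = 2
    & odd n -> 9 <= n -> c = 3].
Proof.
move=> m_gt1 n_ge3 c; rewrite {}/c.
have cylE k : 3 < n -> ei_colorable (cyl m n) k = circ13_colorable n k.
  exact: ei_colorable_cylE.
split=> [n3 | n5 | n7 | n_even | n_odd n_ge9]; try subst n.
- exact: chi_ei_eq (ei_colorable_cyl3 m) (ei_uncolorable_cyl3 m_gt1).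
- apply: chi_ei_eq; rewrite ?cylE //.
    exact: circ13_colorable5.
  exact: circ13_uncolorable5_4.
- apply: chi_ei_eq; rewrite ?cylE //.
    exact: circ13_colorable7.
  exact: circ13_uncolorable7_3.
- have n_gt3 : 3 < n by lia.
  apply: chi_ei_eq; rewrite ?cylE //.
    exact: circ13_colorable2_even.
  by apply: circ13_uncolorable1; lia.
- have n_gt3 : 3 < n by lia.
  apply: chi_ei_eq; rewrite ?cylE //.
    exact: circ13_colorable3_odd.
  exact: circ13_uncolorable2_odd.
Qed.
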